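(* If $e$ is an NLPCF program (i.e. $e\in\mathcal{P}\!\mathit{rog}^{NL}(\tau)$ for some type $\tau$) and $e\not\rightsquigarrow$, then $e$ is in canonical form.
   Context: NLPCF is LPCF extended with non-determinism. Types: $\tau ::= \mathsf{Nat}\mid\mathsf{Bool}\mid \tau\,\&\,\tau' \mid \tau\otimes\tau' \mid \tau\multimap\tau' \mid \tau\to\tau'\mid\mathsf{T}\tau$. Terms: $e ::= x \mid \mathtt{0},\mathtt{1},\dots \mid \mathtt{succ}\mid\mathtt{pred}\mid\mathtt{iszero} \mid \lambda x.e \mid e\,e' \mid \mathtt{true}\mid\mathtt{false} \mid \mathtt{if}\ e_1\ \mathtt{then}\ e_2\ \mathtt{else}\ e_3 \mid \langle e_1,e_2\rangle \mid \mathtt{proj}_i(e) \mid \mathtt{fix}_\tau \mid e_1\otimes e_2 \mid \mathtt{let}\ x\otimes y = e\ \mathtt{in}\ e' \mid \mathtt{val}(e)\mid \mathtt{bind}\ x\Leftarrow e\ \mathtt{in}\ e'\mid e\sqcap e'$, up to $\alpha$-equivalence ($\lambda$, $\mathtt{let}$, $\mathtt{bind}$ bind variables), with capture-avoiding substitution. Typing judgements $\Gamma;\Delta\vdash e:\tau$ ($\Gamma$ non-linear, $\Delta$ linear environments, disjoint domains; $\Delta,\Delta'$ disjoint union): $\Gamma;\emptyset\vdash x:\tau$ if $x:\tau\in\Gamma$; $\Gamma;x:\tau\vdash x:\tau$ if $x\notin\Gamma$; $\Gamma;\emptyset\vdash\mathtt{fix}_\tau:(\tau\to\tau)\to\tau$;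 numerals $:\mathsf{Nat}$, $\mathtt{true},\mathtt{false}:\mathsf{Bool}$, $\mathtt{succ},\mathtt{pred}:\mathsf{Nat}\multimap\mathsf{Nat}$, $\mathtt{iszero}:\mathsf{Nat}\multimap\mathsf{Bool}$ (all with empty $\Delta$); from $\Gamma;\Delta\vdash e_1:\mathsf{Bool}$, $\Gamma;\Delta'\vdash e_2:\tau$, $\Gamma;\Delta'\vdash e_3:\tau$ infer $\Gamma;\Delta,\Delta'\vdash\mathtt{if}\ e_1\ \mathtt{then}\ e_2\ \mathtt{else}\ e_3:\tau$; from $\Gamma;\Delta\vdash e_i:\tau_i$ infer $\Gamma;\Delta\vdash\langle e_1,e_2\rangle:\tau_1\&\tau_2$; from $\Gamma;\Delta\vdash e:\tau_1\&\tau_2$ infer $\Gamma;\Delta\vdash\mathtt{proj}_i(e):\tau_i$; from $\Gamma;\Delta_i\vdash e_i:\tau_i$ infer $\Gamma;\Delta_1,\Delta_2\vdash e_1\otimes e_2:\tau_1\otimes\tau_2$; from $\Gamma;\Delta,x:\tau_1,y:\tau_2\vdash e:\tau$ and $\Gamma;\Delta'\vdash e':\tau_1\otimes\tau_2$ infer $\Gamma;\Delta,\Delta'\vdash\mathtt{let}\ x\otimes y=e'\ \mathtt{in}\ e:\tau$; from $\Gamma,x:\tau;\Delta\vdash e:\tau'$ infer $\Gamma;\Delta\vdash\lambda x.e:\tau\to\tau'$; from $\Gamma;\Delta\vdash e:\tau'\to\tau$, $\Gamma;\emptyset\vdash e':\tau'$ infer $\Gamma;\Delta\vdash e\,e':\tau$;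 from $\Gamma;\Delta,x:\tau\vdash e:\tau'$ infer $\Gamma;\Delta\vdash\lambda x.e:\tau\multimap\tau'$; from $\Gamma;\Delta\vdash e:\tau'\multimap\tau$, $\Gamma;\Delta'\vdash e':\tau'$ infer $\Gamma;\Delta,\Delta'\vdash e\,e':\tau$; from $\Gamma;\Delta\vdash e:\tau$ infer $\Gamma;\Delta\vdash\mathtt{val}(e):\mathsf{T}\tau$; from $\Gamma;\emptyset\vdash e_1:\mathsf{T}\tau_1$ and $\Gamma,x:\tau_1;\Delta\vdash e_2:\mathsf{T}\tau_2$ infer $\Gamma;\Delta\vdash\mathtt{bind}\ x\Leftarrow e_1\ \mathtt{in}\ e_2:\mathsf{T}\tau_2$; from $\Gamma;\Delta\vdash e_1:\mathsf{T}\tau_1$ and $\Gamma;\Delta',x:\tau_1\vdash e_2:\mathsf{T}\tau_2$ infer $\Gamma;\Delta,\Delta'\vdash\mathtt{bind}\ x\Leftarrow e_1\ \mathtt{in}\ e_2:\mathsf{T}\tau_2$; from $\Gamma;\Delta\vdash e_i:\mathsf{T}\tau$ ($i=1,2$) infer $\Gamma;\Delta\vdash e_1\sqcap e_2:\mathsf{T}\tau$. $\mathcal{P}\!\mathit{rog}^{NL}(\tau)=\{e\mid\emptyset;\emptyset\vdash e:\tau\}$. One-step reduction $\rightsquigarrow$: least relation containing $(\lambda x.e)e'\rightsquigarrow e[e'/x]$; $\mathtt{fix}_\tau\,e\rightsquigarrow e(\mathtt{fix}_\tau\,e)$; $\mathtt{succ}\,n\rightsquigarrow n+1$; $\mathtt{pred}\,0\rightsquigarrow0$;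 $\mathtt{pred}\,n\rightsquigarrow n-1$ ($n\ge1$); $\mathtt{iszero}\,0\rightsquigarrow\mathtt{true}$; $\mathtt{iszero}\,n\rightsquigarrow\mathtt{false}$ ($n\ge1$); $\mathtt{if}\ \mathtt{true}\ \mathtt{then}\ e_1\ \mathtt{else}\ e_2\rightsquigarrow e_1$; $\mathtt{if}\ \mathtt{false}\ \mathtt{then}\ e_1\ \mathtt{else}\ e_2\rightsquigarrow e_2$; $\mathtt{proj}_i\langle e_1,e_2\rangle\rightsquigarrow e_i$; $\mathtt{let}\ x\otimes y=e_1\otimes e_2\ \mathtt{in}\ e\rightsquigarrow e[e_1/x,e_2/y]$; $\mathtt{bind}\ x\Leftarrow\mathtt{val}(e')\ \mathtt{in}\ e\rightsquigarrow(\lambda x.e)e'$ when $e'\not\rightsquigarrow$; $e_1\sqcap e_2\rightsquigarrow e_i$ ($i=1,2$); closed under $\mathcal{E}[e_1]\rightsquigarrow\mathcal{E}[e_2]$ for evaluation contexts $\mathcal{E}::=[\,]\mid\mathtt{succ}(\mathcal{E})\mid\mathtt{pred}(\mathcal{E})\mid\mathtt{iszero}(\mathcal{E})\mid\mathcal{E}\,e\mid\mathtt{if}\ \mathcal{E}\ \mathtt{then}\ e_1\ \mathtt{else}\ e_2\mid\mathtt{proj}_i(\mathcal{E})\mid\mathtt{let}\ x\otimes y=\mathcal{E}\ \mathtt{in}\ e\mid\mathtt{bind}\ x\Leftarrow\mathcal{E}\ \mathtt{in}\ e\mid\mathtt{val}(\mathcal{E})$. Canonical forms: $\mathtt{succ},\mathtt{pred},\mathtt{iszero},\mathtt{true},\mathtt{false}$,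 numerals, $\mathtt{fix}_\tau$, $\langle e,e'\rangle$, $e\otimes e'$, $\lambda x.e$, and $\mathtt{val}(v)$ with $v\not\rightsquigarrow$. *)

From Stdlib Require Import List.
Import ListNotations.

Inductive ty : Type :=
| TNat | TBool
| TWith   (t1 t2 : ty)
| TTensor (t1 t2 : ty)
| TLolli  (t1 t2 : ty)
| TArr    (t1 t2 : ty)
| TT      (t : ty).

(* Terms with de Bruijn indices (this quotients by alpha-equivalence).
   Lam b : b binds index 0.
   LetT p b  = let x ⊗ y = p in b : in b, index 0 is y and index 1 is x.
   Bind m b  = bind x <= m in b : in b, index 0 is x. *)
Inductive tm : Type :=
| Var (n : nat)
| Num (n : nat)
| Succ | Pred | IsZero
| Lam (b : tm)
| App (f a : tm)
| Tru | Fls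
| If (c t f : tm)
| Pair (a b : tm)
| Proj1 (p : tm) | Proj2 (p : tm)
| Fix (t : ty)
| Tens (a b : tm)
| LetT (p b : tm)
| Val (v : tm)
| Bind (m b : tm)
| Choice (a b : tm).

Definition up_ren (r : nat -> nat) : nat -> nat :=
  fun n => match n with 0 => 0 | S k => S (r k) end.

Fixpoint rename (r : nat -> nat) (e : tm) : tm :=
  match e with
  | Var n => Var (r n)
  | Num n => Num n
  | Succ => Succ | Pred => Pred | IsZero => IsZero
  | Lam b => Lam (rename (up_ren r) b)
  | App f a => App (rename r f) (rename r a)
  | Tru => Tru | Fls => Fls
  | If c t f => If (rename r c) (rename r t) (rename r f)
  | Pair a b => Pair (rename r a) (rename r b)
  | Proj1 p => Proj1 (rename r p)
  | Proj2 p => Proj2 (rename r p)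
  | Fix t => Fix t
  | Tens a b => Tens (rename r a) (rename r b)
  | LetT p b => LetT (rename r p) (rename (up_ren (up_ren r)) b)
  | Val v => Val (rename r v)
  | Bind m b => Bind (rename r m) (rename (up_ren r) b)
  | Choice a b => Choice (rename r a) (rename r b)
  end.

Definition up_sub (s : nat -> tm) : nat -> tm :=
  fun n => match n with 0 => Var 0 | S k => rename S (s k) end.

Fixpoint subst (s : nat -> tm) (e : tm) : tm :=
  match e with
  | Var n => s n
  | Num n => Num n
  | Succ => Succ | Pred => Pred | IsZero => IsZero
  | Lam b => Lam (subst (up_sub s) b)
  | App f a => App (subst s f) (subst s a)
  | Tru => Tru | Fls => Fls
  | If c t f => If (subst s c) (subst s t) (subst s f)
  | Pair a b => Pair (subst s a) (subst s b)
  | Proj1 p => Proj1 (subst s p)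
  | Proj2 p => Proj2 (subst s p)
  | Fix t => Fix t
  | Tens a b => Tens (subst s a) (subst s b)
  | LetT p b => LetT (subst s p) (subst (up_sub (up_sub s)) b)
  | Val v => Val (subst s v)
  | Bind m b => Bind (subst s m) (subst (up_sub s) b)
  | Choice a b => Choice (subst s a) (subst s b)
  end.

Definition subst1 (a b : tm) : tm :=
  subst (fun n => match n with 0 => a | S k => Var k end) b.

(* b[a1/x, a2/y] where y is index 0 and x is index 1 of b *)
Definition subst2 (a1 a2 b : tm) : tm :=
  subst (fun n => match n with 0 => a2 | 1 => a1 | S (S k) => Var k end) b.

(* A context assigns to each de Bruijn index either a non-linear type (Γ),
   a linear type (Δ), or nothing (variable not available). *)
Inductive entry : Type := ENL (t : ty) | EL (t : ty) | ENo.
Definition ctx := list entry.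

Definition no_lin (c : ctx) : Prop := forall n t, nth_error c n <> Some (EL t).

Definition erase (c : ctx) : ctx :=
  map (fun x => match x with EL _ => ENo | y => y end) c.

(* split c c1 c2 : c = Γ;Δ1,Δ2 , c1 = Γ;Δ1 , c2 = Γ;Δ2 (disjoint union) *)
Inductive split : ctx -> ctx -> ctx -> Prop :=
| split_nil : split [] [] []
| split_nl t c c1 c2 : split c c1 c2 -> split (ENL t :: c) (ENL t :: c1) (ENL t :: c2)
| split_l1 t c c1 c2 : split c c1 c2 -> split (EL t :: c) (EL t :: c1) (ENo :: c2)
| split_l2 t c c1 c2 : split c c1 c2 -> split (EL t :: c) (ENo :: c1) (EL t :: c2)
| split_no c c1 c2 : split c c1 c2 -> split (ENo :: c) (ENo :: c1) (ENo :: c2).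

Inductive has_type : ctx -> tm -> ty -> Prop :=
| T_VarNL c n t : nth_error c n = Some (ENL t) -> no_lin c -> has_type c (Var n) t
| T_VarL c n t : nth_error c n = Some (EL t) ->
    (forall m s, m <> n -> nth_error c m <> Some (EL s)) -> has_type c (Var n) t
| T_Fix c t : no_lin c -> has_type c (Fix t) (TArr (TArr t t) t)
| T_Num c n : no_lin c -> has_type c (Num n) TNat
| T_Tru c : no_lin c -> has_type c Tru TBool
| T_Fls c : no_lin c -> has_type c Fls TBool
| T_Succ c : no_lin c -> has_type c Succ (TLolli TNat TNat)
| T_Pred c : no_lin c -> has_type c Pred (TLolli TNat TNat)
| T_IsZero c : no_lin c -> has_type c IsZero (TLolli TNat TBool)
| T_If c c1 c2 e1 e2 e3 t : split c c1 c2 -> has_type c1 e1 TBool ->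
    has_type c2 e2 t -> has_type c2 e3 t -> has_type c (If e1 e2 e3) t
| T_Pair c e1 e2 t1 t2 : has_type c e1 t1 -> has_type c e2 t2 ->
    has_type c (Pair e1 e2) (TWith t1 t2)
| T_Proj1 c e t1 t2 : has_type c e (TWith t1 t2) -> has_type c (Proj1 e) t1
| T_Proj2 c e t1 t2 : has_type c e (TWith t1 t2) -> has_type c (Proj2 e) t2
| T_Tens c c1 c2 e1 e2 t1 t2 : split c c1 c2 -> has_type c1 e1 t1 ->
    has_type c2 e2 t2 -> has_type c (Tens e1 e2) (TTensor t1 t2)
| T_LetT c c1 c2 e e' t1 t2 t : split c c1 c2 ->
    has_type (EL t2 :: EL t1 :: c1) e t -> has_type c2 e' (TTensor t1 t2) ->
    has_type c (LetT e' e) t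
| T_LamNL c e t t' : has_type (ENL t :: c) e t' -> has_type c (Lam e) (TArr t t')
| T_AppNL c e e' t t' : has_type c e (TArr t' t) -> has_type (erase c) e' t' ->
    has_type c (App e e') t
| T_LamL c e t t' : has_type (EL t :: c) e t' -> has_type c (Lam e) (TLolli t t')
| T_AppL c c1 c2 e e' t t' : split c c1 c2 -> has_type c1 e (TLolli t' t) ->
    has_type c2 e' t' -> has_type c (App e e') t
| T_Val c e t : has_type c e t -> has_type c (Val e) (TT t)
| T_BindNL c e1 e2 t1 t2 : has_type (erase c) e1 (TT t1) ->
    has_type (ENL t1 :: c) e2 (TT t2) -> has_type c (Bind e1 e2) (TT t2)
| T_BindL c c1 c2 e1 e2 t1 t2 : split c c1 c2 -> has_type c1 e1 (TT t1) ->
    has_type (EL t1 :: c2) e2 (TT t2) -> has_type c (Bind e1 e2) (TT t2)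
| T_Choice c e1 e2 t : has_type c e1 (TT t) -> has_type c e2 (TT t) ->
    has_type c (Choice e1 e2) (TT t).

Definition prog (t : ty) (e : tm) : Prop := has_type [] e t.

(* Defined by structural recursion on the source term; this stratifies the
   negative side condition "e' does not reduce" of the bind/val rule
   (e' is a strict subterm of the redex).  The clauses are the axioms plus
   closure under the evaluation contexts
   [] | succ E | pred E | iszero E | E e | if E .. | proj_i E | let x⊗y = E in e
   | bind x <= E in e | val E. *)
Fixpoint step (e : tm) (e2 : tm) {struct e} : Prop :=
  match e with
  | App f a =>
      (match f with
       | Lam b => e2 = subst1 a b
       | Fix t => e2 = App a (App (Fix t) a)
       | Succ => (exists n, a = Num n /\ e2 = Num (S n))
                 \/ (exists a', step a a' /\ e2 = App Succ a')
       | Pred => (a = Num 0 /\ e2 = Num 0)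
                 \/ (exists n, a = Num (S n) /\ e2 = Num n)
                 \/ (exists a', step a a' /\ e2 = App Pred a')
       | IsZero => (a = Num 0 /\ e2 = Tru)
                   \/ (exists n, a = Num (S n) /\ e2 = Fls)
                   \/ (exists a', step a a' /\ e2 = App IsZero a')
       | _ => False
       end)
      \/ (exists f', step f f' /\ e2 = App f' a)
  | If c t f =>
      (c = Tru /\ e2 = t) \/ (c = Fls /\ e2 = f)
      \/ (exists c', step c c' /\ e2 = If c' t f)
  | Proj1 p =>
      (exists a b, p = Pair a b /\ e2 = a) \/ (exists p', step p p' /\ e2 = Proj1 p')
  | Proj2 p =>
      (exists a b, p = Pair a b /\ e2 = b) \/ (exists p', step p p' /\ e2 = Proj2 p')
  | LetT p b =>
      (exists a1 a2, p = Tens a1 a2 /\ e2 = subst2 a1 a2 b)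
      \/ (exists p', step p p' /\ e2 = LetT p' b)
  | Bind m b =>
      (match m with
       | Val v => (~ exists v', step v v') /\ e2 = App (Lam b) v
       | _ => False
       end)
      \/ (exists m', step m m' /\ e2 = Bind m' b)
  | Val v => exists v', step v v' /\ e2 = Val v'
  | Choice a b => e2 = a \/ e2 = b
  | _ => False
  end.

Definition irreducible (e : tm) : Prop := ~ exists e', step e e'.

Definition canonical (e : tm) : Prop :=
  match e with
  | Succ | Pred | IsZero | Tru | Fls | Num _ | Fix _
  | Pair _ _ | Tens _ _ | Lam _ => True
  | Val v => irreducible v
  | _ => False
  end.

(** Progress: by induction on typing, a closed well-typed term is either
    canonical or reduces, since a canonical term in the evaluation position of
    an eliminator always forms a redex. *)
From Pilot Require Import Defs.
From Stdlib Require Import List.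
Import ListNotations.

Lemma split_nil_inv {c1 c2} : Defs.split [] c1 c2 -> c1 = [] /\ c2 = [].
Proof. intros H; inversion H; auto. Qed.

Lemma canonical_irreducible e : canonical e -> irreducible e.
Proof.
  destruct e; simpl; try contradiction; intros Hc [e' He']; try exact He'.
  destruct He' as [v' [Hv _]]; apply Hc; eauto.
Qed.

Section CanonicalForms.

Context {v : tm} {t1 t2 : ty}.
Hypothesis v_canonical : canonical v.

Ltac invert_canonical H := destruct v; simpl in v_canonical; try contradiction;
  inversion H; subst; eauto.

Lemma canonical_Nat : has_type [] v TNat -> exists n, v = Num n.
Proof. intros H; invert_canonical H. Qed.

Lemma canonical_Bool : has_type [] v TBool -> v = Tru \/ v = Fls.
Proof. intros H; invert_canonical H. Qed.

Lemma canonical_With : has_type [] v (TWith t1 t2) -> exists a b, v = Pair a b.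
Proof. intros H; invert_canonical H. Qed.

Lemma canonical_Tensor : has_type [] v (TTensor t1 t2) -> exists a b, v = Tens a b.
Proof. intros H; invert_canonical H. Qed.

Lemma canonical_T : has_type [] v (TT t1) -> exists w, v = Val w /\ irreducible w.
Proof. intros H; invert_canonical H. Qed.

Lemma canonical_Arr : has_type [] v (TArr t1 t2) ->
  (exists b, v = Lam b) \/ (exists t, v = Fix t).
Proof. intros H; invert_canonical H. Qed.

Lemma canonical_Lolli : has_type [] v (TLolli t1 t2) ->
  (exists b, v = Lam b) \/ ((v = Succ \/ v = Pred \/ v = IsZero) /\ t1 = TNat).
Proof. intros H; invert_canonical H. Qed.

End CanonicalForms.

Ltac reduces := right; eexists; simpl; eauto 8.

Lemma progress_closed {e t} : has_type [] e t -> canonical e \/ exists e', step e e'.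
Proof.
  remember [] as c eqn:Hc; intros H.
  induction H; subst; try (left; exact I); try (destruct n; discriminate).
  - destruct (split_nil_inv H) as [-> ->].
    destruct (IHhas_type1 eq_refl) as [Hcan | [c' Hc']]; [|reduces].
    destruct (canonical_Bool Hcan H0) as [-> | ->]; reduces.
  - destruct (IHhas_type eq_refl) as [Hcan | [p' Hp']]; [|reduces].
    destruct (canonical_With Hcan H) as [a [b ->]]; reduces.
  - destruct (IHhas_type eq_refl) as [Hcan | [p' Hp']]; [|reduces].
    destruct (canonical_With Hcan H) as [a [b ->]]; reduces.
  - destruct (split_nil_inv H) as [-> ->].
    destruct (IHhas_type2 eq_refl) as [Hcan | [p' Hp']]; [|reduces].
    destruct (canonical_Tensor Hcan H1) as [a [b ->]]; reduces.
  - destruct (IHhas_type1 eq_refl) as [Hcan | [f' Hf']]; [|reduces].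
    destruct (canonical_Arr Hcan H) as [[b ->] | [t0 ->]]; reduces.
  - destruct (split_nil_inv H) as [-> ->].
    destruct (IHhas_type1 eq_refl) as [Hcan | [f' Hf']]; [|reduces].
    destruct (canonical_Lolli Hcan H0) as [[b ->] | [Hprim ->]]; [reduces|].
    destruct (IHhas_type2 eq_refl) as [Hcan' | [a' Ha']].
    + destruct (canonical_Nat Hcan' H1) as [[|n] ->];
        destruct Hprim as [-> | [-> | ->]]; reduces.
    + destruct Hprim as [-> | [-> | ->]]; reduces.
  - destruct (IHhas_type eq_refl) as [Hcan | [v' Hv']]; [|reduces].
    left; apply canonical_irreducible, Hcan.
  - destruct (IHhas_type1 eq_refl) as [Hcan | [m' Hm']]; [|reduces].
    destruct (canonical_T Hcan H) as [w [-> Hw]]; reduces.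
  - destruct (split_nil_inv H) as [-> ->].
    destruct (IHhas_type1 eq_refl) as [Hcan | [m' Hm']]; [|reduces].
    destruct (canonical_T Hcan H0) as [w [-> Hw]]; reduces.
  - reduces.
Qed.

Theorem proposition4 : forall (t : ty) (e : tm),
  prog t e -> irreducible e -> canonical e.
Proof.
  intros t e Htyped Hirr.
  destruct (progress_closed Htyped) as [Hcan | Hstep]; [exact Hcan | contradiction].
Qed.
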